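(* Let $A\in\mathbb{R}^{m\times n}$, $b\in\mathbb{R}^m$ and $\delta\ge 0$, and assume $\{x\in\mathbb{R}^n:\|Ax-b\|\le\delta\}\neq\emptyset$. Let $\mathcal{S}^*$ be the set of globally optimal solutions of $$\min_{x,v\in\mathbb{R}^n}\{\langle e,e-v\rangle:\ \|Ax-b\|\le\delta,\ \langle v,|x|\rangle=0,\ 0\le v\le e\},$$ and for $\rho>0$ let $\mathcal{S}^*_\rho$ be the set of globally optimal solutions of $$\min_{x,v\in\mathbb{R}^n}\{\langle e,e-v\rangle+\rho\langle v,|x|\rangle:\ \|Ax-b\|\le\delta,\ 0\le v\le e\}.$$ Then there exists a constant $\bar\rho>0$ such that $\mathcal{S}^*=\mathcal{S}^*_\rho$ for all $\rho>\bar\rho$.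
   Context: $\|\cdot\|$ is the Euclidean norm, $e\in\mathbb{R}^n$ is the all-ones vector, $|x|$ is the componentwise absolute value, and vector inequalities are componentwise. *)

From HB Require Import structures.
From mathcomp Require Import all_boot all_order all_algebra.
From mathcomp Require Import reals.
Set Implicit Arguments. Unset Strict Implicit. Unset Printing Implicit Defensive.
Import Order.TTheory GRing.Theory Num.Theory.
Local Open Scope ring_scope.

Section Defs.
Variable R : realType.

Definition dotv n (u v : 'cV[R]_n) : R := \sum_(i < n) u i 0 * v i 0.
Definition enorm n (u : 'cV[R]_n) : R := Num.sqrt (\sum_(i < n) u i 0 ^+ 2).
Definition absv n (x : 'cV[R]_n) : 'cV[R]_n := \col_i `|x i 0|.
Definition ones n : 'cV[R]_n := const_mx 1.
Definition box01 n (v : 'cV[R]_n) : Prop := forall i, 0 <= v i 0 <= 1.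

Definition feas m n (A : 'M[R]_(m, n)) (b : 'cV[R]_m) (delta : R)
  (x v : 'cV[R]_n) : Prop := enorm (A *m x - b) <= delta /\ box01 v.

Definition obj0 n (v : 'cV[R]_n) : R := dotv (ones n) (ones n - v).
Definition objpen n (rho : R) (x v : 'cV[R]_n) : R :=
  obj0 v + rho * dotv v (absv x).

Definition feasC m n A b delta (x v : 'cV[R]_n) : Prop :=
  @feas m n A b delta x v /\ dotv v (absv x) = 0.

Definition Sstar m n (A : 'M[R]_(m, n)) b delta (x v : 'cV[R]_n) : Prop :=
  feasC A b delta x v /\
  forall x' v' : 'cV[R]_n, feasC A b delta x' v' -> obj0 v <= obj0 v'.

Definition Sstar_rho m n (A : 'M[R]_(m, n)) b delta rho (x v : 'cV[R]_n)
  : Prop :=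
  feas A b delta x v /\
  forall x' v' : 'cV[R]_n, feas A b delta x' v' ->
    objpen rho x v <= objpen rho x' v'.
End Defs.

(* Let K be the least number of nonzero entries of a point x with
   ||Ax - b|| <= delta.  For each index set J with fewer than K elements no
   such point is supported on J, so the least-squares residual over vectors
   supported on J exceeds delta^2; since dropping the entries of x outside J
   changes the residual by at most a quadratic in their l1-norm, that l1-norm
   is bounded below by a constant c > 0 on the feasible set.  Coordinatewise,
   1 - v_i + rho v_i |x_i| is at least 1 when rho |x_i| > 1 and at least
   rho |x_i| otherwise, so once rho c > K every feasible (x, v) has penalised
   value >= K, with equality only when <v, |x|> = 0.  A sparsest feasible x
   together with the indicator of its zero entries has value K in both
   problems, hence their minimisers coincide. *)

From HB Require Import structures.
From mathcomp Require Import all_boot all_order all_algebra.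
From mathcomp Require Import reals boolp.
From mathcomp Require Import ring lra.
Import Order.TTheory GRing.Theory Num.Theory.
Set Implicit Arguments. Unset Strict Implicit.
Local Open Scope ring_scope.

Section LeastSquares.
Variable R : realType.
Implicit Types (k : nat).

Definition sqnorm k (u : 'cV[R]_k) := dotv u u.

Lemma sqnorm_ge0 k (u : 'cV[R]_k) : 0 <= sqnorm u.
Proof. by apply: sumr_ge0 => i _; rewrite -expr2 sqr_ge0. Qed.

Lemma sqnorm_eq0 k (u : 'cV[R]_k) : sqnorm u = 0 -> u = 0.
Proof.
move=> u0; apply/matrixP => i j; rewrite ord1 mxE; apply/eqP.
have sq_ge0 j' : xpredT j' -> 0 <= u j' 0 * u j' 0 by rewrite -expr2 sqr_ge0.
by have /eqP := psumr_eq0P sq_ge0 u0 (i := i) isT; rewrite mulf_eq0 orbb.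
Qed.

Lemma dotv0l k (y : 'cV[R]_k) : dotv 0 y = 0.
Proof. by apply: big1 => i _; rewrite mxE mul0r. Qed.

Lemma dotvBr k (a y z : 'cV[R]_k) : dotv a (y - z) = dotv a y - dotv a z.
Proof. by rewrite /dotv -sumrB; apply: eq_bigr => i _; rewrite !mxE mulrBr. Qed.

Lemma dotvZr k (a y : 'cV[R]_k) t : dotv a (t *: y) = t * dotv a y.
Proof. by rewrite /dotv mulr_sumr; apply: eq_bigr => i _; rewrite mxE mulrCA. Qed.

Lemma dotv_sumr k I (r : seq I) (a : 'cV[R]_k) (F : I -> 'cV[R]_k) :
  dotv a (\sum_(j <- r) F j) = \sum_(j <- r) dotv a (F j).
Proof.
rewrite /dotv exchange_big; apply: eq_bigr => i _.
by rewrite summxE mulr_sumr.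
Qed.

Lemma sqnorm_addZ k (y a : 'cV[R]_k) t :
  sqnorm (y + t *: a) = sqnorm y + 2 * t * dotv a y + t ^+ 2 * sqnorm a.
Proof.
rewrite /sqnorm /dotv !mulr_sumr -!big_split /=; apply: eq_bigr => i _.
by rewrite !mxE; ring.
Qed.

Definition orthp k (a y : 'cV[R]_k) := y - (dotv a y / sqnorm a) *: a.

Lemma sqnorm_addZ_orthp k (y a : 'cV[R]_k) t :
  sqnorm (y + t *: a) =
  sqnorm (orthp a y) + (t + dotv a y / sqnorm a) ^+ 2 * sqnorm a.
Proof.
have proj_coef : dotv a y / sqnorm a * sqnorm a = dotv a y.
  have [a0|a_neq0] := eqVneq (sqnorm a) 0; last by rewrite divfK.
  by rewrite (sqnorm_eq0 a0) dotv0l !mul0r.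
rewrite /orthp -scaleNr !sqnorm_addZ.
move: proj_coef; set s := dotv a y / sqnorm a => <-; ring.
Qed.

Lemma orthp_comb k l (a b : 'cV[R]_k) (s : 'I_l -> 'cV[R]_k) (c : 'I_l -> R) :
  orthp a (\sum_j c j *: s j - b) = \sum_j c j *: orthp a (s j) - orthp a b.
Proof.
rewrite /orthp dotvBr dotv_sumr.
under [X in (X - _) / _]eq_bigr do rewrite dotvZr.
rewrite mulrBl scalerBl mulr_suml scaler_suml.
under [in RHS]eq_bigr do rewrite scalerBr scalerA mulrA.
rewrite sumrB; apply/matrixP => i j; rewrite !mxE; ring.
Qed.

Lemma lsq_exists k l (s : 'I_l -> 'cV[R]_k) (b : 'cV[R]_k) :
  exists c0 : 'I_l -> R, forall c : 'I_l -> R,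
    sqnorm (\sum_j c0 j *: s j - b) <= sqnorm (\sum_j c j *: s j - b).
Proof.
(* The coefficient of [s ord0] is optimised through [sqnorm_addZ_orthp], the
   others by induction on the components orthogonal to [s ord0]. *)
elim: l s b => [|l IHl] s b; first by exists (fun _ => 0) => c; rewrite !big_ord0.
set a := s ord0.
have [c1 min_c1] := IHl (fun j => orthp a (s (lift ord0 j))) (orthp a b).
set y1 := \sum_j c1 j *: s (lift ord0 j) - b.
pose t1 := - (dotv a y1 / sqnorm a).
exists (fun j => if unlift ord0 j is Some i then c1 i else t1) => c.
have split_first (d : 'I_l.+1 -> R) : \sum_j d j *: s j - b =
    (\sum_j d (lift ord0 j) *: s (lift ord0 j) - b) + d ord0 *: a.
  by rewrite big_ord_recl -addrA addrC.
rewrite !split_first unlift_none.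
under eq_bigr do rewrite liftK.
rewrite !sqnorm_addZ_orthp -/y1 addNr expr0n mul0r addr0.
have := min_c1 (fun j => c (lift ord0 j)); rewrite -!orthp_comb -/y1.
by move/le_trans; apply; rewrite lerDl mulr_ge0 ?sqr_ge0 ?sqnorm_ge0.
Qed.

End LeastSquares.

Section EntrywiseBounds.
Variable R : realType.
Implicit Types (k : nat).

Lemma ler_term_sum (T : finType) (F : T -> R) i :
  (forall j, 0 <= F j) -> F i <= \sum_j F j.
Proof. by move=> F_ge0; rewrite (bigD1 i) //= lerDl sumr_ge0. Qed.

Lemma enormE k (u : 'cV[R]_k) : enorm u = Num.sqrt (sqnorm u).
Proof. by congr Num.sqrt; apply: eq_bigr => i _; rewrite expr2. Qed.

Lemma enorm_le k (u : 'cV[R]_k) d : 0 <= d -> (enorm u <= d) = (sqnorm u <= d ^+ 2).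
Proof.
move=> d_ge0; rewrite enormE -(ler_sqrt (sqnorm u)) ?sqr_ge0 //.
by rewrite sqrtr_sqr ger0_norm.
Qed.

Lemma normr_entry_le_enorm k (u : 'cV[R]_k) i : `|u i 0| <= enorm u.
Proof.
have sqr_le : u i 0 ^+ 2 <= sqnorm u.
  rewrite expr2; apply: (ler_term_sum (F := fun j => u j 0 * u j 0)) => j.
  by rewrite -expr2 sqr_ge0.
by rewrite enormE -sqrtr_sqr ler_sqrt ?sqnorm_ge0.
Qed.

Lemma sqnorm_subr_le k (u z : 'cV[R]_k) p q :
  (forall i, `|u i 0| <= p) -> (forall i, `|z i 0| <= q) ->
  sqnorm (u - z) <= sqnorm u + k%:R * (2 * p * q + q ^+ 2).
Proof.
move=> u_le z_le.
have -> : k%:R * (2 * p * q + q ^+ 2) = \sum_(i < k) (2 * p * q + q ^+ 2).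
  by rewrite sumr_const card_ord mulr_natl.
rewrite /sqnorm /dotv -big_split /=; apply: ler_sum => i _; rewrite !mxE.
have cross_le : - (u i 0 * z i 0) <= p * q.
  rewrite (le_trans (ler_norm _)) // normrN normrM.
  by rewrite ler_pM ?normr_ge0.
have z_sqr_le : z i 0 ^+ 2 <= q ^+ 2.
  by rewrite -real_normK ?num_real // ler_sqr ?nnegrE // (le_trans _ (z_le i)).
nra.
Qed.

Definition mx_abs_sum m k (A : 'M[R]_(m, k)) := \sum_i \sum_j `|A i j|.

Lemma normr_mulmx_le m k (A : 'M[R]_(m, k)) (w : 'cV[R]_k) i :
  `|(A *m w) i 0| <= mx_abs_sum A * \sum_j `|w j 0|.
Proof.
rewrite mxE (le_trans (ler_norm_sum _ _ _)) //.
apply: (@le_trans _ _ (\sum_j `|A i j| * \sum_l `|w l 0|)).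
  apply: ler_sum => j _; rewrite normrM ler_wpM2l //.
  exact: (ler_term_sum (F := fun l => `|w l 0|)).
rewrite -mulr_suml ler_wpM2r ?sumr_ge0 //.
by apply: (ler_term_sum (F := fun i => \sum_j `|A i j|)) => l; exact: sumr_ge0.
Qed.

End EntrywiseBounds.

Section SupportGap.
Variable R : realType.

Lemma ge_min_of_le_quadratic (eta p q s : R) :
  0 < eta -> 0 <= p -> 0 <= q -> 0 <= s -> eta <= p * s + q * s ^+ 2 ->
  Num.min 1 (eta / (p + q + 1)) <= s.
Proof.
move=> eta_gt0 p_ge0 q_ge0 s_ge0 eta_le; rewrite leNgt lt_min; apply/negP.
case/andP=> s_lt1; rewrite ltr_pdivlMr; last by lra.
have : q * s ^+ 2 <= q * s by rewrite ler_wpM2l // expr2; nra.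
nra.
Qed.

Definition restr_col n (J : {set 'I_n}) (x : 'cV[R]_n) :=
  \col_i (if i \in J then x i 0 else 0).

Lemma mulmx_restr_col m n (A : 'M[R]_(m, n)) J (x : 'cV[R]_n) :
  A *m restr_col J x = \sum_j x j 0 *: (if j \in J then col j A else 0).
Proof.
apply/matrixP => i k; rewrite !mxE summxE; apply: eq_bigr => j _.
by rewrite !mxE; case: (j \in J); rewrite ?mxE ?ord1 ?mulr0 // mulrC.
Qed.

Variables (m n : nat) (A : 'M[R]_(m, n)) (b : 'cV[R]_m) (delta : R).
Hypothesis delta_ge0 : 0 <= delta.

Lemma lsq_restr_col_exists (J : {set 'I_n}) : exists x0 : 'cV[R]_n, forall x,
  sqnorm (A *m restr_col J x0 - b) <= sqnorm (A *m restr_col J x - b).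
Proof.
have [c0 min_c0] := lsq_exists (fun j => if j \in J then col j A else 0) b.
exists (\col_j c0 j) => x; rewrite !mulmx_restr_col.
by under eq_bigr do rewrite mxE; exact: min_c0.
Qed.

Lemma sqnorm_restr_col_residual_le (J : {set 'I_n}) (x : 'cV[R]_n) :
  let S := \sum_(i | i \notin J) `|x i 0| in
  enorm (A *m x - b) <= delta ->
  sqnorm (A *m restr_col J x - b) <=
    delta ^+ 2 + m%:R * (2 * delta * (mx_abs_sum A * S) + (mx_abs_sum A * S) ^+ 2).
Proof.
move=> S x_feas; pose w := x - restr_col J x.
have w_norm : \sum_j `|w j 0| = S.
  rewrite /S [RHS]big_mkcond; apply: eq_bigr => i _.
  by rewrite !mxE; case: (i \in J); rewrite ?subrr ?normr0 ?subr0.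
have -> : A *m restr_col J x - b = (A *m x - b) - A *m w.
  by rewrite mulmxBr; apply/matrixP => i j; rewrite !mxE; ring.
apply: le_trans (sqnorm_subr_le (p := delta) (q := mx_abs_sum A * S) _ _) _
  => [i|i|].
- exact: le_trans (normr_entry_le_enorm _ i) x_feas.
- by rewrite -w_norm normr_mulmx_le.
- by rewrite lerD2r -enorm_le.
Qed.

Lemma support_gap (J : {set 'I_n}) :
  (forall x, enorm (A *m x - b) <= delta ->
    ~ (forall i, i \notin J -> x i 0 = 0)) ->
  exists2 c, 0 < c & forall x, enorm (A *m x - b) <= delta ->
    c <= \sum_(i | i \notin J) `|x i 0|.
Proof.
move=> not_supported; have [x0 min_x0] := lsq_restr_col_exists J.
set D := sqnorm _ in min_x0.
have D_gt : delta ^+ 2 < D.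
  rewrite ltNge; apply/negP => D_le.
  apply: (not_supported (restr_col J x0)) => [|i /negbTE iNJ].
    by rewrite enorm_le.
  by rewrite mxE iNJ.
set alpha := mx_abs_sum A.
have alpha_ge0 : 0 <= alpha by rewrite !sumr_ge0 // => i _; rewrite sumr_ge0.
exists (Num.min 1 ((D - delta ^+ 2) /
    (m%:R * (2 * delta * alpha) + m%:R * alpha ^+ 2 + 1))).
  rewrite lt_min ltr01 divr_gt0 ?subr_gt0 //.
  by rewrite ltr_wpDl ?addr_ge0 ?mulr_ge0 ?sqr_ge0.
move=> x x_feas.
have S_ge0 : 0 <= \sum_(i | i \notin J) `|x i 0| by rewrite sumr_ge0.
apply: ge_min_of_le_quadratic; rewrite ?subr_gt0 ?mulr_ge0 ?sqr_ge0 //.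
have := le_trans (min_x0 x) (sqnorm_restr_col_residual_le J x_feas).
by rewrite -/alpha; nra.
Qed.

End SupportGap.

Section Penalty.
Variable R : realType.

Lemma penalty_term_ge_indicator (v a : R) :
  0 <= v <= 1 -> 0 <= a -> (if 1 < a then 1 else 0) <= 1 - v + v * a.
Proof. by case/andP=> v_ge0 v_le1 a_ge0; case: (ltP 1 a) => a1 /=; nra. Qed.

Lemma penalty_term_ge0 (v a : R) : 0 <= v <= 1 -> 0 <= a -> 0 <= 1 - v + v * a.
Proof. by case/andP=> v_ge0 v_le1 a_ge0; nra. Qed.

Lemma penalty_term_ge_id (v a : R) : 0 <= v <= 1 -> a <= 1 -> a <= 1 - v + v * a.
Proof. by case/andP=> v_ge0 v_le1 a_le1; nra. Qed.

Lemma penalty_term_eq_indicator (v a : R) :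
  0 <= v <= 1 -> 0 <= a -> 1 - v + v * a = (if 1 < a then 1 else 0) -> v * a = 0.
Proof.
case/andP=> v_ge0 v_le1 a_ge0; case: (ltP 1 a) => a1 /= term_eq.
  have /eqP : v * (a - 1) = 0 by lra.
  by rewrite mulf_eq0 subr_eq0 (gt_eqF a1) orbF => /eqP ->; rewrite mul0r.
have : v * a <= 0 by lra.
by move=> va_le0; apply/le_anti; rewrite va_le0 mulr_ge0.
Qed.

Lemma objpenE n rho (x v : 'cV[R]_n) :
  objpen rho x v = \sum_i (1 - v i 0 + v i 0 * (rho * `|x i 0|)).
Proof.
rewrite /objpen /obj0 /dotv mulr_sumr -big_split; apply: eq_bigr => i _.
by rewrite !mxE /= mul1r mulrCA.
Qed.

Lemma natr_card (T : finType) (J : {set T}) :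
  #|J|%:R = \sum_i (if i \in J then 1 else 0 : R).
Proof. by rewrite -big_mkcond /= sumr_const. Qed.

Variables (n : nat) (rho : R) (x v : 'cV[R]_n).
Hypotheses (rho_gt0 : 0 < rho) (v_box : box01 v).

Definition large_coords := [set i | 1 < rho * `|x i 0|].

Let rho_normr_ge0 i : 0 <= rho * `|x i 0|.
Proof. by rewrite mulr_ge0 // ltW. Qed.

Lemma objpen_ge_card : #|large_coords|%:R <= objpen rho x v.
Proof.
rewrite objpenE natr_card; apply: ler_sum => i _; rewrite inE.
exact: penalty_term_ge_indicator.
Qed.

Lemma objpen_ge_small_coords :
  rho * \sum_(i | i \notin large_coords) `|x i 0| <= objpen rho x v.
Proof.
rewrite objpenE mulr_sumr [X in _ <= X](bigID (mem large_coords)) /=.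
rewrite ler_wpDl ?sumr_ge0 // => [i _|]; first exact: penalty_term_ge0.
by apply: ler_sum => i; rewrite inE -leNgt; exact: penalty_term_ge_id.
Qed.

Lemma objpen_le_card_compl :
  objpen rho x v <= #|large_coords|%:R -> dotv v (absv x) = 0.
Proof.
move=> pen_le; pose F i := 1 - v i 0 + v i 0 * (rho * `|x i 0|) -
  (if 1 < rho * `|x i 0| then 1 else 0).
have F_ge0 i : true -> 0 <= F i by rewrite subr_ge0 penalty_term_ge_indicator.
have F_sum0 : \sum_i F i = 0.
  apply/le_anti; rewrite sumr_ge0 // andbT sumrB -objpenE subr_le0.
  by rewrite (le_trans pen_le) // natr_card; under eq_bigr do rewrite inE.
rewrite /dotv big1 // => i _; rewrite mxE.
have : v i 0 * (rho * `|x i 0|) = 0.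
  apply: penalty_term_eq_indicator => //; apply/eqP; rewrite -subr_eq0; apply/eqP.
  exact: (psumr_eq0P F_ge0 F_sum0).
by rewrite mulrCA => /eqP; rewrite mulf_eq0 gt_eqF //= => /eqP.
Qed.

End Penalty.

Lemma fin_uniform_lb (R : realType) (T : finType) (U : Type)
    (Q : T -> U -> Prop) (f : T -> U -> R) :
  (forall t, exists2 c, 0 < c & forall u, Q t u -> c <= f t u) ->
  exists2 c, 0 < c & forall t u, Q t u -> c <= f t u.
Proof.
move=> lb.
suff [c c_gt0 c_lb] : exists2 c, 0 < c &
    forall t, t \in enum T -> forall u, Q t u -> c <= f t u.
  by exists c => // t; apply: c_lb; rewrite mem_enum.
elim: (enum T) => [|t s [c2 c2_gt0 c2_lb]]; first by exists 1.
have [c1 c1_gt0 c1_lb] := lb t.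
exists (Num.min c1 c2); first by rewrite lt_min c1_gt0.
move=> t'; rewrite inE => /orP[/eqP -> | t's] u Qu.
  by rewrite ge_min c1_lb.
by rewrite ge_min c2_lb ?orbT.
Qed.

Section ExactPenalty.
Variables (R : realType) (m n : nat) (A : 'M[R]_(m, n)) (b : 'cV[R]_m) (delta : R).

Definition col_support (x : 'cV[R]_n) := [set i | x i 0 != 0].

Definition zero_indicator (x : 'cV[R]_n) : 'cV[R]_n :=
  \col_i (if x i 0 == 0 then 1 else 0).

Lemma feasC_zero_indicator x :
  enorm (A *m x - b) <= delta -> feasC A b delta x (zero_indicator x).
Proof.
move=> x_feas; split.
  by split=> // i; rewrite mxE; case: eqP; rewrite lexx ler01.
apply: big1 => i _; rewrite !mxE.
by case: eqP => [->|_]; rewrite ?normr0 ?mulr0 ?mul0r.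
Qed.

Lemma obj0_zero_indicator x : obj0 (zero_indicator x) = #|col_support x|%:R.
Proof.
rewrite natr_card; apply: eq_bigr => i _; rewrite !mxE inE mul1r.
by case: eqP; rewrite ?subrr ?subr0.
Qed.

Lemma objpen_compl rho (x v : 'cV[R]_n) :
  dotv v (absv x) = 0 -> objpen rho x v = obj0 v.
Proof. by rewrite /objpen => ->; rewrite mulr0 addr0. Qed.

Lemma Sstar_iff_Sstar_rho rho kappa (x0 v0 : 'cV[R]_n) :
  feasC A b delta x0 v0 -> obj0 v0 <= kappa ->
  (forall x v, feas A b delta x v -> kappa <= objpen rho x v) ->
  (forall x v, feas A b delta x v ->
    objpen rho x v <= kappa -> dotv v (absv x) = 0) ->
  forall x v, Sstar A b delta x v <-> Sstar_rho A b delta rho x v.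
Proof.
move=> feasC0 obj0_le pen_ge pen_le_compl x v; split.
  case=> [[xv_feas xv_compl] xv_min]; split=> // x' v' xv'_feas.
  rewrite objpen_compl // (le_trans (xv_min _ _ feasC0)) //.
  exact: le_trans obj0_le (pen_ge _ _ xv'_feas).
case=> xv_feas xv_min.
have pen0 : objpen rho x0 v0 = obj0 v0 by rewrite objpen_compl //; case: feasC0.
have xv_compl : dotv v (absv x) = 0.
  by apply: pen_le_compl => //; rewrite (le_trans (xv_min _ _ feasC0.1)) ?pen0.
split=> // x' v' [xv'_feas xv'_compl].
by rewrite -(objpen_compl rho xv_compl) -(objpen_compl rho xv'_compl) xv_min.
Qed.

Hypothesis delta_ge0 : 0 <= delta.
Variable K : nat.
Hypothesis K_le_support :
  forall x, enorm (A *m x - b) <= delta -> (K <= #|col_support x|)%N.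

Lemma uniform_support_gap :
  exists2 c, 0 < c & forall (J : {set 'I_n}) x,
    (#|J| < K)%N /\ enorm (A *m x - b) <= delta ->
    c <= \sum_(i | i \notin J) `|x i 0|.
Proof.
apply: fin_uniform_lb => J; have [J_small|J_large] := ltnP #|J| K; last first.
  by exists 1 => // x [].
have [c c_gt0 c_lb] : exists2 c, 0 < c & forall x, enorm (A *m x - b) <= delta ->
    c <= \sum_(i | i \notin J) `|x i 0|.
  apply: support_gap => // x x_feas x_supp.
  have supp_sub : col_support x \subset J.
    apply/subsetP => i; rewrite inE; apply: contraR => iNJ; apply/eqP.
    exact: x_supp.
  have := leq_trans (K_le_support x_feas) (subset_leq_card supp_sub).
  by rewrite leqNgt J_small.
by exists c => // x [] _ /c_lb.
Qed.

Lemma objpen_ge_least_support c rho :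
  0 < c -> (forall (J : {set 'I_n}) x,
    (#|J| < K)%N /\ enorm (A *m x - b) <= delta ->
    c <= \sum_(i | i \notin J) `|x i 0|) ->
  K%:R < rho * c -> forall x v, feas A b delta x v ->
  K%:R <= objpen rho x v /\ (objpen rho x v <= K%:R -> dotv v (absv x) = 0).
Proof.
move=> c_gt0 gap K_lt x v [x_feas v_box].
have rho_gt0 : 0 < rho by rewrite -(pmulr_lgt0 _ c_gt0) (le_lt_trans _ K_lt).
have [J_small|J_large] := ltnP #|large_coords rho x| K.
  have : K%:R < objpen rho x v.
    apply: (lt_le_trans K_lt).
    apply: le_trans (objpen_ge_small_coords x rho_gt0 v_box).
    by rewrite ler_wpM2l ?gap // ltW.
  by split=> [|pen_le]; [exact: ltW | lra].
have K_le : K%:R <= #|large_coords rho x|%:R :> R by rewrite ler_nat.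
split; first exact: le_trans K_le (objpen_ge_card x rho_gt0 v_box).
move=> pen_le; apply: (objpen_le_card_compl rho_gt0 v_box).
exact: le_trans pen_le K_le.
Qed.

End ExactPenalty.

Theorem theorem3p1 (R : realType) (m n : nat) (A : 'M[R]_(m, n))
  (b : 'cV[R]_m) (delta : R) :
  0 <= delta ->
  (exists x : 'cV[R]_n, enorm (A *m x - b) <= delta) ->
  exists rhobar : R, 0 < rhobar /\
    forall rho : R, rhobar < rho ->
      forall x v : 'cV[R]_n,
        Sstar A b delta x v <-> Sstar_rho A b delta rho x v.
Proof.
move=> delta_ge0 [x1 x1_feas].
pose sparse k :=
  `[< exists2 x, enorm (A *m x - b) <= delta & (#|col_support x| <= k)%N >].
have sparse_n : sparse n.
  by apply/asboolP; exists x1; rewrite // (leq_trans (max_card _)) ?card_ord.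
case: (ex_minnP (ex_intro _ n sparse_n)) => K /asboolP[x0 x0_feas x0_supp] K_min.
have K_le x : enorm (A *m x - b) <= delta -> (K <= #|col_support x|)%N.
  by move=> x_feas; apply: K_min; apply/asboolP; exists x.
have [c c_gt0 gap] := uniform_support_gap delta_ge0 K_le.
exists ((K%:R + 1) / c); split; first by rewrite divr_gt0 ?ltr_wpDl.
move=> rho; rewrite ltr_pdivrMr // => K_lt.
have {}K_lt : K%:R < rho * c by lra.
have pen := objpen_ge_least_support c_gt0 gap K_lt.
apply: (Sstar_iff_Sstar_rho (kappa := K%:R) (feasC_zero_indicator x0_feas)).
- by rewrite obj0_zero_indicator ler_nat.
- by move=> x v /pen[].
- by move=> x v /pen[].
Qed.
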